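(* For every integer $m\geq 0$, $$\text{(i)}\ A_{1,m}=\frac{m(m+1)(m+\lambda)(m+\lambda+1)}{2\lambda+1};\qquad\text{(ii)}\ \widetilde A_{1,m}=\frac{m(m+\lambda)\big(m^2+\lambda m-\frac12\big)}{2\lambda+1}.$$
   Context: Fix $\lambda>-1/2$. Define polynomials $Q_m$ by $Q_0=1$, $Q_1(\mu)=1-\frac{2(\lambda+1)(\lambda+2)}{2\lambda+1}\mu$ and, for $m\geq2$, $$Q_m-Q_{m-1}=\frac{m(2m-1)(2m+\lambda)}{(m-1+\lambda)(2m-2+\lambda)(2m-1+2\lambda)}\big[Q_{m-1}-Q_{m-2}\big]-\frac{2m(2m-1+\lambda)(2m+\lambda)}{2m-1+2\lambda}\,\mu\,Q_{m-1}(\mu).$$ Define $\widetilde Q_m$ by $\widetilde Q_0=1$, $\widetilde Q_1(\mu)=1-\frac{\lambda+1}{2}\mu$ and, for $m\geq2$, $$\widetilde Q_m-\widetilde Q_{m-1}=\frac{(m-1)(2m-1)(2m-1+\lambda)}{(m-1+\lambda)(2m-3+\lambda)(2m-3+2\lambda)}\big[\widetilde Q_{m-1}-\widetilde Q_{m-2}\big]-\frac{(2m-1)(2m-2+\lambda)(2m-1+\lambda)}{2(m-1+\lambda)}\,\mu\,\widetilde Q_{m-1}(\mu).$$ Write $Q_m(\mu)=\sum_{i=0}^m(-1)^iA_{i,m}\mu^i$ and $\widetilde Q_m(\mu)=\sum_{i=0}^m(-1)^i\widetilde A_{i,m}\mu^i$ (so $A_{0,m}=\widetilde A_{0,m}=1$),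 with $A_{i,m}=\widetilde A_{i,m}=0$ for $i>m$. *)

From mathcomp Require Import all_boot all_order all_algebra.
Set Implicit Arguments. Unset Strict Implicit. Unset Printing Implicit Defensive.
Import Order.TTheory GRing.Theory Num.Theory.
Local Open Scope ring_scope.

Section Defs.
Variable R : realFieldType.
Variable lam : R.

Definition Q1 : {poly R} :=
  1 - ((2 * (lam + 1) * (lam + 2)) / (2 * lam + 1)) *: 'X.

Definition Qstep (m : nat) (a b : {poly R}) : {poly R} :=
  let mR := m%:R in
  b + ((mR * (2 * mR - 1) * (2 * mR + lam))
        / ((mR - 1 + lam) * (2 * mR - 2 + lam) * (2 * mR - 1 + 2 * lam))) *: (b - a)
    - ((2 * mR * (2 * mR - 1 + lam) * (2 * mR + lam)) / (2 * mR - 1 + 2 * lam)) *: ('X * b).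

(* Qpair n = (Q_n, Q_{n+1}) *)
Fixpoint Qpair (n : nat) : {poly R} * {poly R} :=
  match n with
  | 0 => (1, Q1)
  | n'.+1 => let p := Qpair n' in (p.2, Qstep n'.+2 p.1 p.2)
  end.

Definition Q (m : nat) : {poly R} := (Qpair m).1.

Definition Qt1 : {poly R} := 1 - ((lam + 1) / 2) *: 'X.

Definition Qtstep (m : nat) (a b : {poly R}) : {poly R} :=
  let mR := m%:R in
  b + (((mR - 1) * (2 * mR - 1) * (2 * mR - 1 + lam))
        / ((mR - 1 + lam) * (2 * mR - 3 + lam) * (2 * mR - 3 + 2 * lam))) *: (b - a)
    - (((2 * mR - 1) * (2 * mR - 2 + lam) * (2 * mR - 1 + lam)) / (2 * (mR - 1 + lam))) *: ('X * b).

Fixpoint Qtpair (n : nat) : {poly R} * {poly R} :=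
  match n with
  | 0 => (1, Qt1)
  | n'.+1 => let p := Qtpair n' in (p.2, Qtstep n'.+2 p.1 p.2)
  end.

Definition Qt (m : nat) : {poly R} := (Qtpair m).1.

(* Q_m(mu) = sum_i (-1)^i A_{i,m} mu^i *)
Definition A (i m : nat) : R := (-1) ^+ i * (Q m)`_i.
Definition At (i m : nat) : R := (-1) ^+ i * (Qt m)`_i.

End Defs.

From mathcomp Require Import all_boot all_order all_algebra.
From mathcomp Require Import ring lra.
Import Order.TTheory GRing.Theory Num.Theory.
Local Open Scope ring_scope.

(* Only the coefficients of [1] and [mu] matter.  In a recurrence
   [P_m = P_{m-1} + a_m (P_{m-1} - P_{m-2}) - b_m mu P_{m-1}] the constant
   term stays [1], and the negated linear coefficients [F_m] obey the scalar
   recurrence [F_m = F_{m-1} + a_m (F_{m-1} - F_{m-2}) + b_m].  Both closed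
   forms satisfy it (a rational identity in [m], whose denominators are
   positive for [lam > -1/2]) and agree with the initial values. *)

Section LowCoefficients.
Variables (R : comNzRingType) (s t F : nat -> R) (P : nat -> {poly R}).
Hypotheses (P0 : P 0 = 1) (P1 : P 1 = 1 - F 1 *: 'X).
Hypothesis PSS :
  forall n, P n.+2 = P n.+1 + s n *: (P n.+1 - P n) - t n *: ('X * P n.+1).
Hypotheses (F0 : F 0 = 0)
  (FSS : forall n, F n.+2 = F n.+1 + s n * (F n.+1 - F n) + t n).

Lemma recurrence_coef01 n : (P n)`_0 = 1 /\ (P n)`_1 = - F n.
Proof.
suff [c0 c1 _ _] : [/\ (P n)`_0 = 1, (P n)`_1 = - F n,
                      (P n.+1)`_0 = 1 & (P n.+1)`_1 = - F n.+1] by [].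
elim: n => [|n [c0 c1 c0' c1']].
  by rewrite P0 P1 F0 !(coefB, coefZ, coefC, coefX) /=; split; ring.
rewrite PSS !(coefB, coefD, coefN, coefZ, coefXM) /= c0 c0' c1' c1 FSS.
by split=> //; ring.
Qed.

End LowCoefficients.

Section ClosedForms.
Variables (R : realFieldType) (lam : R).

Lemma lam_denom_neq0 : - (1 / 2) < lam -> 2 * lam + 1 != 0.
Proof. by move=> lam_gt; rewrite gt_eqF //; lra. Qed.

(* The coefficients of [Q_{m-1} - Q_{m-2}] and of [mu Q_{m-1}] in the
   recurrence for [Q_m] (resp. [Qt_m]), as functions of a real [m]. *)
Definition Q_ratio (m : R) : R :=
  m * (2 * m - 1) * (2 * m + lam)
  / ((m - 1 + lam) * (2 * m - 2 + lam) * (2 * m - 1 + 2 * lam)).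

Definition Q_shift (m : R) : R :=
  2 * m * (2 * m - 1 + lam) * (2 * m + lam) / (2 * m - 1 + 2 * lam).

Definition Qt_ratio (m : R) : R :=
  (m - 1) * (2 * m - 1) * (2 * m - 1 + lam)
  / ((m - 1 + lam) * (2 * m - 3 + lam) * (2 * m - 3 + 2 * lam)).

Definition Qt_shift (m : R) : R :=
  (2 * m - 1) * (2 * m - 2 + lam) * (2 * m - 1 + lam) / (2 * (m - 1 + lam)).

Definition A1_formula (x : R) : R :=
  x * (x + 1) * (x + lam) * (x + lam + 1) / (2 * lam + 1).

Definition At1_formula (x : R) : R :=
  x * (x + lam) * (x ^+ 2 + lam * x - 1 / 2) / (2 * lam + 1).

Lemma A1_formula_rec (m : R) : - (1 / 2) < lam -> 2 <= m ->
  A1_formula m = A1_formula (m - 1)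
    + Q_ratio m * (A1_formula (m - 1) - A1_formula (m - 2)) + Q_shift m.
Proof.
move=> lam_gt m_ge2; rewrite /A1_formula /Q_ratio /Q_shift.
have ? := lam_denom_neq0 lam_gt.
have ? : m - 1 + lam != 0 by rewrite gt_eqF //; lra.
have ? : 2 * m - 2 + lam != 0 by rewrite gt_eqF //; lra.
have ? : 2 * m - 1 + 2 * lam != 0 by rewrite gt_eqF //; lra.
by field; apply/and4P.
Qed.

Lemma At1_formula_rec (m : R) : - (1 / 2) < lam -> 2 <= m ->
  At1_formula m = At1_formula (m - 1)
    + Qt_ratio m * (At1_formula (m - 1) - At1_formula (m - 2)) + Qt_shift m.
Proof.
move=> lam_gt m_ge2; rewrite /At1_formula /Qt_ratio /Qt_shift.
have ? := lam_denom_neq0 lam_gt.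
have ? : m - 1 + lam != 0 by rewrite gt_eqF //; lra.
have ? : 2 * m - 3 + lam != 0 by rewrite gt_eqF //; lra.
have ? : 2 * m - 3 + 2 * lam != 0 by rewrite gt_eqF //; lra.
by field; apply/and4P.
Qed.

Lemma natrSS_sub (n : nat) :
  n.+2%:R - 1 = n.+1%:R :> R /\ n.+2%:R - 2 = n%:R :> R.
Proof. by rewrite -[n.+2]addn2 -[n.+1]addn1 natrD; split; ring. Qed.

Lemma coef1_Q (m : nat) : - (1 / 2) < lam -> (Q lam m)`_1 = - A1_formula m%:R.
Proof.
move=> lam_gt.
apply: (proj2 (@recurrence_coef01 _ (fun n => Q_ratio n.+2%:R)
  (fun n => Q_shift n.+2%:R) (fun n => A1_formula n%:R) (Q lam) _ _ _ _ _ m)) => //.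
- rewrite /Q /= /Q1; congr (1 - _ *: 'X); rewrite /A1_formula.
  by field; exact: lam_denom_neq0.
- by rewrite /A1_formula !mul0r.
- move=> n; have [e1 e2] := natrSS_sub n.
  by rewrite A1_formula_rec ?e1 ?e2 // ler_nat.
Qed.

Lemma coef1_Qt (m : nat) : - (1 / 2) < lam -> (Qt lam m)`_1 = - At1_formula m%:R.
Proof.
move=> lam_gt.
apply: (proj2 (@recurrence_coef01 _ (fun n => Qt_ratio n.+2%:R)
  (fun n => Qt_shift n.+2%:R) (fun n => At1_formula n%:R) (Qt lam) _ _ _ _ _ m)) => //.
- rewrite /Qt /= /Qt1; congr (1 - _ *: 'X); rewrite /At1_formula.
  by field; exact: lam_denom_neq0.
- by rewrite /At1_formula !mul0r.
- move=> n; have [e1 e2] := natrSS_sub n.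
  by rewrite At1_formula_rec ?e1 ?e2 // ler_nat.
Qed.

End ClosedForms.

Theorem lemma3p1 (R : realFieldType) (lam : R) (hlam : - (1 / 2) < lam) (m : nat) :
  A lam 1 m = (m%:R * (m%:R + 1) * (m%:R + lam) * (m%:R + lam + 1)) / (2 * lam + 1)
  /\ At lam 1 m = (m%:R * (m%:R + lam) * (m%:R ^+ 2 + lam * m%:R - 1 / 2)) / (2 * lam + 1).
Proof.
by rewrite /A /At expr1 !mulN1r coef1_Q // coef1_Qt // !opprK.
Qed.
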